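(* Let $A\in GL(n,\mathbb Z)$ with columns $\mathbf a_1,\dots,\mathbf a_n$ and $\lambda\in\mathbb R^n$. Let $\phi^*$ be the automorphism of $\overline{\mathbb R}[x_1^{\pm1},\dots,x_n^{\pm1}]$ with $\phi^*(x_i)=\lambda_i\odot\mathbf x^{\mathbf a_i}$, let $\phi^*_A$ be the automorphism (of $\overline{\mathbb R}$- or $\mathbb B$-Laurent polynomials) with $\phi_A^*(x_i)=\mathbf x^{\mathbf a_i}$, and let $\operatorname{trop}(\phi):\mathbb R^n\to\mathbb R^n$ be $\mathbf w\mapsto A^T\mathbf w+\lambda$. If $I\subseteq\overline{\mathbb R}[x_1^{\pm1},\dots,x_n^{\pm1}]$ is a tropical ideal and $I'=(\phi^* )^{-1}(I)$, then $I'$ is a tropical ideal, $\phi^*_A(\operatorname{in}_{\operatorname{trop}(\phi)(\mathbf w)}(I'))=\operatorname{in}_{\mathbf w}(I)$ for all $\mathbf w\in\mathbb R^n$, and $V(I')=\operatorname{trop}(\phi)(V(I))$.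
   Context: $\overline{\mathbb R}=(\mathbb R\cup\{\infty\},\min,+)$, $\odot=+$, $\mathbb B=\{0,\infty\}$. $[f]_{\mathbf x^{\mathbf u}}$ is the coefficient of $\mathbf x^{\mathbf u}$, $f(\mathbf w)=\min_{\mathbf u}([f]_{\mathbf x^{\mathbf u}}+\mathbf u\cdot\mathbf w)$. Tropical ideal: for $f,g\in I$ and $\mathbf x^{\mathbf u}$ with $[f]_{\mathbf x^{\mathbf u}}=[g]_{\mathbf x^{\mathbf u}}\ne\infty$ there is $h\in I$ with $[h]_{\mathbf x^{\mathbf u}}=\infty$ and $[h]_{\mathbf x^{\mathbf v}}\ge\min([f]_{\mathbf x^{\mathbf v}},[g]_{\mathbf x^{\mathbf v}})$ for all $\mathbf v$, with equality when $[f]_{\mathbf x^{\mathbf v}}\ne[g]_{\mathbf x^{\mathbf v}}$. $\operatorname{in}_{\mathbf w}(f)=\bigoplus_{\mathbf u:[f]_{\mathbf x^{\mathbf u}}+\mathbf u\cdot\mathbf w=f(\mathbf w)}\mathbf x^{\mathbf u}\in\mathbb B[x^{\pm1}]$, $\operatorname{in}_{\mathbf w}(I)=\{\operatorname{in}_{\mathbf w}(f):f\in I\}$. $V(I)=\{\mathbf w\in\mathbb R^n:$ for every $f\in I$, $f\ne\infty$, the minimum in $f(\mathbf w)$ is attained at least twice$\}$. *)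

(* Tropical Laurent polynomials over Rbar = (R ∪ {∞}, min, +),
   with R : realType; ∞ is represented by None : option R. *)
From HB Require Import structures.
From mathcomp Require Import all_boot all_order all_algebra.
From mathcomp Require Import reals.
Set Implicit Arguments. Unset Strict Implicit. Unset Printing Implicit Defensive.
Import Order.TTheory GRing.Theory Num.Theory.
Local Open Scope ring_scope.

Section Trop.
Variables (R : realType) (n : nat).

Definition exps := 'cV[int]_n.
(* a tropical Laurent "series": coefficient [f]_{x^u} ∈ Rbar, None = ∞ *)
Definition tpoly := exps -> option R.
(* Boolean Laurent polynomials in B = {0,∞}: true = coefficient 0 *)
Definition bpoly := exps -> bool.

Definition tadd (a b : option R) : option R :=
  match a, b with
  | None, _ => b
  | _, None => a
  | Some x, Some y => Some (Num.min x y)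
  end.
Definition tmul (a b : option R) : option R :=
  match a, b with
  | Some x, Some y => Some (x + y)
  | _, _ => None
  end.
Definition tle (a b : option R) : bool :=
  match a, b with
  | _, None => true
  | None, Some _ => false
  | Some x, Some y => x <= y
  end.

Definition dotp (u : exps) (w : 'cV[R]_n) : R :=
  \sum_(i < n) (u i 0)%:~R * w i 0.

Definition covers (s : seq exps) (f : tpoly) : Prop :=
  forall u, f u <> None -> u \in s.
(* f is an element of Rbar[x_1^{±1},...,x_n^{±1}] *)
Definition finsupp (f : tpoly) : Prop := exists s, covers s f.

(* product f ⊙ g, computed through a sequence s covering supp f:
   [f ⊙ g]_u = min_v ([f]_v + [g]_{u-v}) *)
Definition tpmul (s : seq exps) (f g : tpoly) : tpoly :=
  fun u => \big[tadd/None]_(v <- s) tmul (f v) (g (u - v)).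

Definition is_ideal (I : tpoly -> Prop) : Prop :=
  [/\ forall f, I f -> finsupp f,
      I (fun _ => None),
      forall f g, I f -> I g -> I (fun u => tadd (f u) (g u))
    & forall s f g, covers s f -> I g -> I (tpmul s f g)].

Definition tropical_ideal (I : tpoly -> Prop) : Prop :=
  is_ideal I /\
  forall f g u, I f -> I g -> f u = g u -> f u <> None ->
    exists h, [/\ I h, h u = None &
      forall v, tle (tadd (f v) (g v)) (h v) /\
                (f v <> g v -> h v = tadd (f v) (g v))].

(* in_w(f) as a subset of Z^n (the support of a B-Laurent polynomial,
   coefficient 0 on it and ∞ elsewhere): the exponents u with [f]_u ≠ ∞ at
   which the minimum min_v([f]_v + v·w) is attained.
   (Convention: in_w(∞) = ∞, i.e. empty support.) *)
Definition inw (w : 'cV[R]_n) (f : tpoly) (u : exps) : Prop :=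
  exists c, f u = Some c /\
    forall v d, f v = Some d -> c + dotp u w <= d + dotp v w.

Definition inwI (w : 'cV[R]_n) (I : tpoly -> Prop) (Q : exps -> Prop) : Prop :=
  exists f, I f /\ forall u, Q u <-> inw w f u.

Definition tvar (I : tpoly -> Prop) (w : 'cV[R]_n) : Prop :=
  forall f, I f -> (exists u, f u <> None) ->
    exists u v, u <> v /\ inw w f u /\ inw w f v.

(* phi^*(f) for phi^*(x_i) = lambda_i ⊙ x^{a_i}:
   phi^*(c ⊙ x^u) = (c + lambda·u) ⊙ x^{A u}, hence
   [phi^* f]_v = [f]_{A^{-1} v} + lambda·(A^{-1} v) *)
Definition phis (A : 'M[int]_n) (lam : 'cV[R]_n) (f : tpoly) : tpoly :=
  fun v => let u := invmx A *m v in tmul (f u) (Some (dotp u lam)).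

(* phi_A^* on B-polynomials (x^u ↦ x^{A u}), on supports *)
Definition phiA (A : 'M[int]_n) (P : exps -> Prop) : exps -> Prop :=
  fun v => P (invmx A *m v).

Definition tropphi (A : 'M[int]_n) (lam w : 'cV[R]_n) : 'cV[R]_n :=
  (map_mx (fun z : int => z%:~R) A)^T *m w + lam.

End Trop.

From mathcomp Require Import all_boot all_order all_algebra.
From mathcomp Require Import reals ring lra.
From Stdlib Require Import FunctionalExtensionality.
Set Implicit Arguments. Unset Strict Implicit. Unset Printing Implicit Defensive.
Import Order.TTheory GRing.Theory Num.Theory.
Local Open Scope ring_scope.

(* The substitution phi^* sends the term c ⊙ x^u to (c + lambda·u) ⊙ x^{A u};
   since A is invertible it is a bijection on coefficient functions which
   commutes with ⊕ and ⊙, so I' = (phi^* )^{-1}(I) inherits the ideal and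
   elimination axioms from I, and phi^* maps I' onto I. Moreover
   [phi^* f]_{A u} + (A u)·w = [f]_u + u·(A^T w + lambda), so x^u attains the
   minimum of f at trop(phi)(w) exactly when x^{A u} attains the minimum of
   phi^* f at w; this gives both the statement on initial ideals and, since
   trop(phi) is a bijection of R^n, the one on tropical varieties. *)

Section Rbar.
Variable R : realType.
Implicit Types a b c : option R.

Lemma tmulA : associative (@tmul R).
Proof. by case=> [x|] [y|] [z|] //=; rewrite addrA. Qed.

Lemma tmul_Some0 a : tmul a (Some 0) = a.
Proof. by case: a => //= x; rewrite addr0. Qed.

Lemma tmul_SomeK (x : R) : cancel (@tmul R ^~ (Some x)) (@tmul R ^~ (Some (- x))).
Proof. by move=> a; rewrite -tmulA /= subrr tmul_Some0. Qed.

Lemma tmul_Some_inj (x : R) : injective (@tmul R ^~ (Some x)).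
Proof. exact: can_inj (tmul_SomeK x). Qed.

Lemma tmul_Some_eqNone a (x : R) : (tmul a (Some x) = None) <-> a = None.
Proof. by case: a. Qed.

Lemma tmulDl a b c : tmul (tadd a b) c = tadd (tmul a c) (tmul b c).
Proof. by case: a b c => [x|] [y|] [z|] //=; rewrite addr_minl. Qed.

Lemma tmul_big (T : Type) (s : seq T) (F : T -> option R) c :
  tmul (\big[@tadd R/None]_(v <- s) F v) c =
  \big[@tadd R/None]_(v <- s) tmul (F v) c.
Proof. exact: (big_morph (@tmul R ^~ c) (fun a b => tmulDl a b c)). Qed.

Lemma tle_tmul2r a b c : tle a b -> tle (tmul a c) (tmul b c).
Proof. by case: a b c => [x|] [y|] [z|] //=; rewrite lerD2r. Qed.

Lemma tadd_neqNone a b : tadd a b <> None -> a <> None \/ b <> None.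
Proof. by case: a => [x|] /= H; [left|right]. Qed.

Lemma big_tadd_neqNone (T : eqType) (s : seq T) (F : T -> option R) :
  \big[@tadd R/None]_(v <- s) F v <> None -> exists2 v, v \in s & F v <> None.
Proof.
elim: s => [|x s IH]; first by rewrite big_nil.
rewrite big_cons => /tadd_neqNone [Fx | /IH [v vs Fv]].
  by exists x; rewrite ?mem_head.
by exists v; rewrite // in_cons vs orbT.
Qed.

End Rbar.

Section Polynomials.
Variables (R : realType) (n : nat).
Implicit Types (f g : tpoly R n) (u v : exps n) (w : 'cV[R]_n).

Lemma dotpBl u v w : dotp (u - v) w = dotp u w - dotp v w.
Proof.
by rewrite /dotp -sumrB; apply: eq_bigr => i _; rewrite !mxE rmorphB /= mulrBl.
Qed.

Lemma dotpDr u w w' : dotp u (w + w') = dotp u w + dotp u w'.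
Proof. by rewrite /dotp -big_split; apply: eq_bigr => i _; rewrite !mxE mulrDr. Qed.

Lemma dotp_mulmxl (A : 'M[int]_n) u w :
  dotp (A *m u) w = dotp u ((map_mx (fun z : int => (z%:~R : R)) A)^T *m w).
Proof.
have dotpE u' w' : dotp u' w' =
    ((map_mx (fun z : int => (z%:~R : R)) u')^T *m w') 0 0.
  by rewrite /dotp !mxE; apply: eq_bigr => i _; rewrite !mxE.
by rewrite !dotpE map_mxM trmx_mul mulmxA.
Qed.

Lemma finsupp_tadd f g :
  finsupp f -> finsupp g -> finsupp (fun u => tadd (f u) (g u)).
Proof.
move=> [s hs] [t ht]; exists (s ++ t) => u /tadd_neqNone [/hs|/ht] H.
  by rewrite mem_cat H.
by rewrite mem_cat H orbT.
Qed.

Lemma finsupp_tpmul s t f g : covers t g -> finsupp (tpmul s f g).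
Proof.
move=> ht; exists [seq x + y | x <- s, y <- t] => u /big_tadd_neqNone [v vs].
case: (f v) => [a|] //=; case E: (g (u - v)) => [b|] //= _.
have /ht uvt : g (u - v) <> None by rewrite E.
by rewrite -[u](subrK v) addrC; apply: allpairs_f.
Qed.

End Polynomials.

Section MonomialChange.
Variables (R : realType) (n : nat) (A : 'M[int]_n) (lam : 'cV[R]_n).
Hypothesis unitA : A \in unitmx.
Implicit Types (f g F : tpoly R n) (u v : exps n) (w : 'cV[R]_n).

Definition phis_inv F : tpoly R n :=
  fun v => tmul (F (A *m v)) (Some (- dotp v lam)).

Definition preim_phis (I : tpoly R n -> Prop) f : Prop :=
  finsupp f /\ I (phis A lam f).

Lemma phis_mulmx f u : phis A lam f (A *m u) = tmul (f u) (Some (dotp u lam)).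
Proof. by rewrite /phis mulKmx. Qed.

Lemma phisK : cancel (phis A lam) phis_inv.
Proof.
by move=> f; apply: functional_extensionality => v; rewrite /phis_inv phis_mulmx tmul_SomeK.
Qed.

Lemma phis_invK : cancel phis_inv (phis A lam).
Proof.
move=> F; apply: functional_extensionality => v.
by rewrite /phis /phis_inv mulKVmx // -tmulA /= addNr tmul_Some0.
Qed.

Lemma finsupp_phis_inv F : finsupp F -> finsupp (phis_inv F).
Proof.
move=> [s hs]; exists (map (mulmx (invmx A)) s) => v /tmul_Some_eqNone /hs Hv.
by rewrite -(mulKmx unitA v); apply: map_f.
Qed.

Lemma covers_phis s f : covers s f -> covers (map (mulmx A) s) (phis A lam f).
Proof.
move=> hs v /tmul_Some_eqNone /hs Hv.
by rewrite -(mulKVmx unitA v); apply: map_f.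
Qed.

Lemma phis_tadd f g :
  phis A lam (fun u => tadd (f u) (g u)) =
  (fun v => tadd (phis A lam f v) (phis A lam g v)).
Proof. by apply: functional_extensionality => v; rewrite /phis tmulDl. Qed.

Lemma phis_tpmul s f g :
  phis A lam (tpmul s f g) = tpmul (map (mulmx A) s) (phis A lam f) (phis A lam g).
Proof.
apply: functional_extensionality => v.
rewrite /phis /tpmul tmul_big big_map; apply: eq_bigr => u _.
rewrite mulKmx // mulmxBr mulKmx // dotpBl.
by case: (f u) => [a|] //=; case: (g _) => [b|] //=; congr Some; ring.
Qed.

Lemma inw_phis w f u : inw (tropphi A lam w) f u <-> inw w (phis A lam f) (A *m u).
Proof.
rewrite /tropphi; split.
- move=> [c [fu minc]]; exists (c + dotp u lam); split; first by rewrite phis_mulmx fu.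
  move=> x d; rewrite -(mulKVmx unitA x); move: (invmx A *m x) => y.
  rewrite phis_mulmx; case e: (f y) => [d'|] //= [<-].
  by have := minc _ _ e; rewrite !dotp_mulmxl !dotpDr; lra.
- move=> [c [fu minc]]; move: fu; rewrite phis_mulmx.
  case e: (f u) => [c'|] //= [ec]; exists c'; split => // v d fv.
  have := minc (A *m v) (d + dotp v lam); rewrite phis_mulmx fv => /(_ erefl).
  by rewrite -ec !dotp_mulmxl !dotpDr; lra.
Qed.

Lemma tropphi_surjective w' : exists w, w' = tropphi A lam w.
Proof.
set ART := (map_mx (fun z : int => (z%:~R : R)) A)^T.
have unitART : ART \in unitmx.
  by rewrite unitmx_tr unitmxE det_map_mx rmorph_unit // -unitmxE.
by exists (invmx ART *m (w' - lam)); rewrite /tropphi -/ART mulKVmx // subrK.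
Qed.

Section Preimage.
Variable I : tpoly R n -> Prop.
Hypothesis finsuppI : forall F, I F -> finsupp F.

Lemma preim_phis_inv F : I F -> preim_phis I (phis_inv F).
Proof. by move=> IF; split; [exact: finsupp_phis_inv (finsuppI IF) | rewrite phis_invK]. Qed.

Lemma inwI_preim_phis w Q :
  (exists P, inwI (tropphi A lam w) (preim_phis I) P /\ forall v, Q v <-> phiA A P v)
  <-> inwI w I Q.
Proof.
split.
- move=> [P [[f [[_ If] HP]] HQ]]; exists (phis A lam f); split => // v.
  by rewrite HQ /phiA HP inw_phis mulKVmx.
- move=> [F [IF HF]]; exists (inw (tropphi A lam w) (phis_inv F)); split.
    by exists (phis_inv F); split => //; apply: preim_phis_inv.
  by move=> v; rewrite HF /phiA inw_phis phis_invK mulKVmx.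
Qed.

Lemma tvar_preim_phis w : tvar (preim_phis I) (tropphi A lam w) <-> tvar I w.
Proof.
split.
- move=> VI' F IF [x0 Fx0].
  have [|u [v [uv [iu iv]]]] := VI' _ (preim_phis_inv IF).
    by exists (invmx A *m x0); rewrite /phis_inv mulKVmx // => /tmul_Some_eqNone.
  exists (A *m u), (A *m v); split.
    by move/(congr1 (mulmx (invmx A))); rewrite !mulKmx.
  by rewrite -(phis_invK F) -!inw_phis.
- move=> VI f [_ If] [u0 fu0].
  have [|x [y [xy [ix iy]]]] := VI _ If.
    by exists (A *m u0); rewrite phis_mulmx => /tmul_Some_eqNone.
  exists (invmx A *m x), (invmx A *m y); split.
    by move/(congr1 (mulmx A)); rewrite !mulKVmx.
  by rewrite !inw_phis !mulKVmx.
Qed.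

End Preimage.

Lemma is_ideal_preim_phis I : is_ideal I -> is_ideal (preim_phis I).
Proof.
move=> [_ I0 IDl IMl]; split.
- by move=> f [].
- by split; [exists [::] | exact: I0].
- move=> f g [fsf If] [fsg Ig]; split; first exact: finsupp_tadd.
  by rewrite phis_tadd; apply: IDl.
- move=> s f g hs [[t ht] Ig]; split; first exact: finsupp_tpmul ht.
  by rewrite phis_tpmul; apply: IMl => //; apply: covers_phis.
Qed.

Lemma tropical_ideal_preim_phis I : tropical_ideal I -> tropical_ideal (preim_phis I).
Proof.
move=> [idI elimI]; split; first exact: is_ideal_preim_phis.
have [finsuppI _ _ _] := idI.
move=> f g u [_ If] [_ Ig] efg fu.
have efgA : phis A lam f (A *m u) = phis A lam g (A *m u) by rewrite !phis_mulmx efg.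
have fuA : phis A lam f (A *m u) <> None by rewrite phis_mulmx => /tmul_Some_eqNone.
have [h [Ih hu Hh]] := elimI _ _ _ If Ig efgA fuA.
exists (phis_inv h); split; first exact: preim_phis_inv.
  by rewrite /phis_inv hu.
move=> v; have [le_h eq_h] := Hh (A *m v); rewrite !phis_mulmx -tmulDl in le_h eq_h.
split; first by rewrite -[tadd _ _](tmul_SomeK (dotp v lam)); apply: tle_tmul2r.
by move=> ne; rewrite /phis_inv eq_h ?tmul_SomeK // => /tmul_Some_inj.
Qed.

End MonomialChange.

Unset Implicit Arguments.
Theorem lemma4p5 (R : realType) (n : nat) (A : 'M[int]_n) (lam : 'cV[R]_n)
    (I : tpoly R n -> Prop) :
  A \in unitmx ->
  tropical_ideal I ->
  let I' := fun f : tpoly R n => finsupp f /\ I (phis A lam f) in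
  [/\ tropical_ideal I',
      forall (w : 'cV[R]_n) (Q : exps n -> Prop),
        (exists P, inwI (tropphi A lam w) I' P /\
                   forall v, Q v <-> phiA A P v) <-> inwI w I Q
    & forall w' : 'cV[R]_n,
        tvar I' w' <-> exists w, tvar I w /\ w' = tropphi A lam w].
Proof.
move=> unitA tropI I'.
have finsuppI : forall F, I F -> finsupp F by case: tropI => -[].
split.
- exact: (tropical_ideal_preim_phis lam unitA tropI).
- exact: (inwI_preim_phis lam unitA finsuppI).
- move=> w'; split; last by move=> [w [Vw ->]]; apply/(tvar_preim_phis lam unitA finsuppI).
  move=> VI'; have [w ew] := tropphi_surjective lam unitA w'.
  by exists w; split => //; apply/(tvar_preim_phis lam unitA finsuppI); rewrite -ew.
Qed.
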